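(* Let $Z\in\mathbb{R}^{n\times m}$, and let $\theta=(\theta_1,\dots,\theta_q)^T$ with $\theta_1=\sigma^2>0$, where $\Sigma=\Sigma(\theta_2,\dots,\theta_q)\in\mathbb{R}^{m\times m}$ is a covariance matrix depending differentiably on $\theta_2,\dots,\theta_q$. Put $C=Z\Sigma Z^T+\sigma^2I_n$. For each $i$ let $N(i)\subseteq\{1,\dots,i-1\}$, $A_i=(Z\Sigma Z^T)_{i,N(i)}(C_{N(i)})^{-1}$, $D_i=C_{i,i}-A_i(Z\Sigma Z^T)_{N(i),i}$; let $B$ be the unit lower triangular $n\times n$ matrix with $(B)_{i,N(i)}=-A_i$ and zeros elsewhere off the diagonal, and $D=\mathrm{diag}(D_1,\dots,D_n)$. Consider the model $y\sim\mathcal{N}(F,\tilde\Psi)$ with $\tilde\Psi=B^{-1}DB^{-T}$ and fixed mean $F\in\mathbb{R}^n$. Then its Fisher information matrix $I\in\mathbb{R}^{q\times q}$ with respect to $\theta$, $(I)_{kl}=\frac12\mathrm{tr}\left(\tilde\Psi^{-1}\frac{\partial\tilde\Psi}{\partial\theta_k}\tilde\Psi^{-1}\frac{\partial\tilde\Psi}{\partial\theta_l}\right)$, has entries $$(I)_{kl}=\sum_{i,j=1}^n\left(D^{-1}\frac{\partial B}{\partial\theta_k}B^{-1}\right)_{ij}\left(\frac{\partial B}{\partial\theta_l}B^{-1}D\right)_{ij}+\frac12\sum_{i=1}^nD_i^{-2}\frac{\partial D_i}{\partial\theta_k}\frac{\partial D_i}{\partial\theta_l},\qquad 1\le k,l\le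 q,$$ where $\frac{\partial B}{\partial\theta_k}$ (lower triangular with zero diagonal, non-zero entries $(\frac{\partial B}{\partial\theta_k})_{i,N(i)}=-\frac{\partial A_i}{\partial\theta_k}$) and $\frac{\partial D}{\partial\theta_k}=\mathrm{diag}(\frac{\partial D_i}{\partial\theta_k})$ are the entrywise derivatives of $B$ and $D$.
   Context: For a matrix $M$, $M_{i,N(i)}$ is the submatrix with row $i$ and columns $N(i)$, $M_{N(i),i}$ the submatrix with rows $N(i)$ and column $i$, and $M_{N(i)}$ the submatrix with rows and columns $N(i)$. The model $\mathcal{N}(F,B^{-1}DB^{-T})$ is the Vecchia approximation of $y=F+Zb+\epsilon$, $b\sim\mathcal{N}(0,\Sigma)$, $\epsilon\sim\mathcal{N}(0,\sigma^2I_n)$, obtained by replacing each conditional density $p(y_i\mid y_1,\dots,y_{i-1})$ by $p(y_i\mid y_{N(i)})$. *)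

From HB Require Import structures.
From mathcomp Require Import all_boot all_order all_algebra.
From mathcomp Require Import all_classical all_reals all_analysis.
Set Implicit Arguments. Unset Strict Implicit. Unset Printing Implicit Defensive.
Import Order.TTheory GRing.Theory Num.Theory.
Import numFieldNormedType.Exports.
Local Open Scope ring_scope.

Section Vecchia.
Variables (R : realType) (n m : nat).
Variable (Z : 'M[R]_(n, m)).
Variable (N : 'I_n -> {set 'I_n}).

Definition sel (A : {set 'I_n}) : 'M[R]_(#|A|, n) :=
  \matrix_(a < #|A|, j < n) ((enum_val a == j)%:R).

Definition Kmat (S : 'M[R]_m) : 'M[R]_n := Z *m S *m Z^T.
Definition Cmat (S : 'M[R]_m) (s2 : R) : 'M[R]_n := Kmat S + s2%:M.

Definition Csub (S : 'M[R]_m) (s2 : R) (i : 'I_n) : 'M[R]_#|N i| :=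
  \matrix_(a < #|N i|, b < #|N i|) Cmat S s2 (enum_val a) (enum_val b).

Definition Arow (S : 'M[R]_m) (s2 : R) (i : 'I_n) : 'rV[R]_#|N i| :=
  (\row_(b < #|N i|) Kmat S i (enum_val b)) *m invmx (Csub S s2 i).

Definition Dval (S : 'M[R]_m) (s2 : R) (i : 'I_n) : R :=
  Cmat S s2 i i - (Arow S s2 i *m \col_(a < #|N i|) Kmat S (enum_val a) i) 0 0.

Definition Bmat (S : 'M[R]_m) (s2 : R) : 'M[R]_n :=
  1%:M - \matrix_(i < n, j < n) (Arow S s2 i *m sel (N i)) 0 j.

Definition Dmat (S : 'M[R]_m) (s2 : R) : 'M[R]_n :=
  diag_mx (\row_(i < n) Dval S s2 i).

Definition Psi (S : 'M[R]_m) (s2 : R) : 'M[R]_n :=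
  invmx (Bmat S s2) *m Dmat S s2 *m (invmx (Bmat S s2))^T.

(* parametrisation by theta = (theta_1, ..., theta_q) with theta_1 = sigma^2 ;
   index 0 of 'rV_q.+1 is theta_1, and Sigma depends on the remaining q entries *)
Variable (q : nat).
Variable (Sigma : 'rV[R]_q -> 'M[R]_m).

Definition sig2 (th : 'rV[R]_q.+1) : R := th 0 0.
Definition rest (th : 'rV[R]_q.+1) : 'rV[R]_q := \row_(k < q) th 0 (lift ord0 k).

Definition B_th (th : 'rV[R]_q.+1) := Bmat (Sigma (rest th)) (sig2 th).
Definition D_th (th : 'rV[R]_q.+1) := Dmat (Sigma (rest th)) (sig2 th).
Definition Di_th (i : 'I_n) (th : 'rV[R]_q.+1) := Dval (Sigma (rest th)) (sig2 th) i.
Definition Psi_th (th : 'rV[R]_q.+1) := Psi (Sigma (rest th)) (sig2 th).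

Definition ek (k : 'I_q.+1) : 'rV[R]_q.+1 := delta_mx 0 k.

Definition fisher (th : 'rV[R]_q.+1) (k l : 'I_q.+1) : R :=
  2^-1 * \tr (invmx (Psi_th th) *m 'D_(ek k) Psi_th th
              *m invmx (Psi_th th) *m 'D_(ek l) Psi_th th).

End Vecchia.
Arguments ek {R q} k.

From HB Require Import structures.
From mathcomp Require Import all_boot all_order all_algebra.
From mathcomp Require Import all_classical all_reals all_analysis.
From mathcomp Require Import ring.
Import Order.TTheory GRing.Theory Num.Theory.
Import numFieldNormedType.Exports.
Local Open Scope ring_scope.
Set Implicit Arguments. Unset Strict Implicit.

(* Write Psi = B^-1 D B^-T and P_k = (dB/dtheta_k) B^-1.  The product rule gives
   Psi^-1 dPsi/dtheta_k = B^T M_k B^-T with M_k = - D^-1 P_k D + D^-1 dD/dtheta_k - P_k^T,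
   so the trace in the Fisher information is tr (M_k M_l).  Since B is unit lower
   triangular with a constant diagonal, P_k is strictly lower triangular; M_k thus
   splits into a strictly lower, a diagonal and a strictly upper part, and only the
   lower*upper, upper*lower and diagonal*diagonal products have a nonzero trace.  The
   two mixed products both equal sum_ij (D^-1 P_k)_ij (P_l D)_ij, which gives the
   formula.  All derivatives exist because sigma^2 > 0 makes C positive definite:
   every C_{N(i)} is invertible and D_i >= sigma^2 > 0. *)

Section MatrixDerivatives.
Variables (R : realFieldType) (V : normedModType R).
Implicit Types (x v : V).

Lemma is_derive_mxP m n (F : V -> 'M[R]_(m, n)) x v dF :
  is_derive x v F dF <-> forall i j, is_derive x v (fun y => F y i j) (dF i j).
Proof.
split=> [[dF_ <-] i j | dFij].
  have dFij := (derivable_mxP F x v).1 dF_ i j.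
  by apply: DeriveDef => //; rewrite derive_mx // mxE.
have dF_ : derivable F x v by apply/derivable_mxP => i j; case: (dFij i j).
apply: DeriveDef => //; rewrite derive_mx //; apply/matrixP => i j.
by rewrite mxE; case: (dFij i j).
Qed.

Lemma is_derive_mulmx m n p (F : V -> 'M[R]_(m, n)) (G : V -> 'M[R]_(n, p))
    x v dF dG :
  is_derive x v F dF -> is_derive x v G dG ->
  is_derive x v (fun y => F y *m G y) (dF *m G x + F x *m dG).
Proof.
move=> /is_derive_mxP dFij /is_derive_mxP dGij; apply/is_derive_mxP => i j.
have -> : (fun y => (F y *m G y) i j) =
          \sum_k ((fun y => F y i k) * (fun y => G y k j)).
  by rewrite fct_sumE; apply/funext => y; rewrite mxE.
rewrite !mxE -big_split /=; apply: is_derive_sum => k.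
apply: is_derive_eq (is_deriveM (dFij i k) (dGij k j)) _.
by rewrite /GRing.scale /= addrC mulrC [G x k j * _]mulrC.
Qed.

Lemma derivable_mulmx m n p (F : V -> 'M[R]_(m, n)) (G : V -> 'M[R]_(n, p)) x v :
  derivable F x v -> derivable G x v -> derivable (fun y => F y *m G y) x v.
Proof. by move=> /derivableP dF /derivableP dG; case: (is_derive_mulmx dF dG). Qed.

Lemma is_derive_trmx m n (F : V -> 'M[R]_(m, n)) x v dF :
  is_derive x v F dF -> is_derive x v (fun y => (F y)^T) dF^T.
Proof.
move=> /is_derive_mxP dFij; apply/is_derive_mxP => i j.
by rewrite mxE; under eq_fun do rewrite mxE; apply: dFij.
Qed.

Lemma is_derive_diag_mx n (d : V -> 'rV[R]_n) x v dd :
  is_derive x v d dd -> is_derive x v (fun y => diag_mx (d y)) (diag_mx dd).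
Proof.
move=> /is_derive_mxP ddj; apply/is_derive_mxP => i j.
rewrite mxE; under eq_fun do rewrite mxE.
case: (i == j); last exact: is_derive_cst.
by under eq_fun do rewrite mulr1n; rewrite mulr1n; apply: ddj.
Qed.

Lemma derivable_scalar_mx n (f : V -> R) x v :
  derivable f x v -> derivable (fun y => (f y)%:M : 'M[R]_n) x v.
Proof.
move=> df; apply/derivable_mxP => i j; under eq_fun do rewrite mxE.
case: (i == j); last exact: derivable_cst.
by under eq_fun do rewrite mulr1n.
Qed.

Lemma derivable_det n (M : V -> 'M[R]_n) x v :
  derivable M x v -> derivable (fun y => \det (M y)) x v.
Proof.
elim: n M => [|n IHn] M dM.
  by under eq_fun do rewrite det_mx00; apply: derivable_cst.
have -> : (fun y => \det (M y)) =
          \sum_j (fun y => M y ord0 j * cofactor (M y) ord0 j).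
  by rewrite fct_sumE; apply/funext => y; rewrite (expand_det_row _ ord0).
apply: derivable_sum => j; apply: derivableM.
  exact: (derivable_mxP M x v).1.
apply: derivableM; first exact: derivable_cst.
apply: (IHn (fun y => row' ord0 (col' j (M y)))); apply/derivable_mxP => a b.
by under eq_fun do rewrite !mxE; apply: (derivable_mxP M x v).1.
Qed.

Lemma derivable_cofactor n (M : V -> 'M[R]_n) x v i j :
  derivable M x v -> derivable (fun y => cofactor (M y) i j) x v.
Proof.
move=> dM; apply: derivableM; first exact: derivable_cst.
apply: (derivable_det (M := fun y => row' i (col' j (M y)))).
by apply/derivable_mxP => a b; under eq_fun do rewrite !mxE; apply: (derivable_mxP M x v).1.
Qed.

End MatrixDerivatives.

Lemma derive_along_line {R : numFieldType} {V W : normedModType R} (f : V -> W) x v :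
  'D_v f x = 'D_1 (fun h : R => f (h *: v + x)) 0.
Proof.
rewrite /derive; set g1 := fun h => h^-1 *: _; set g2 := fun h => h^-1 *: _.
suff -> : g1 = g2 by [].
by apply/funext => h /=; rewrite /g1 /g2 /= addr0 scale0r add0r [_%:A]mulr1.
Qed.

Lemma is_derive_alongP {R : numFieldType} {V W : normedModType R} (f : V -> W) x v df :
  is_derive x v f df <-> is_derive (0 : R) (1 : R) (fun h : R => f (h *: v + x)) df.
Proof.
split=> -[dfx <-]; apply: DeriveDef.
- exact: (derivable1P f x v).1.
- by rewrite [RHS]derive_along_line.
- exact/derivable1P.
- by rewrite [LHS]derive_along_line.
Qed.

Section MatrixInverseDerivative.
Variable R : realFieldType.

Lemma derivable1_near_unitmx n (g : R -> 'M[R]_n) (t : R) :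
  derivable g t 1 -> g t \in unitmx -> \forall h \near t, g h \in unitmx.
Proof.
move=> dg gt_unit; have /derivable1_diffP ddet := derivable_det dg.
apply: filterS (cvgr_neq0 _ (differentiable_continuous ddet) _) => [h|].
  by rewrite unitmxE unitfE.
by rewrite -unitfE -unitmxE.
Qed.

Lemma derivable1_invmx n (g : R -> 'M[R]_n) (t : R) :
  derivable g t 1 -> g t \in unitmx -> derivable (fun h => invmx (g h)) t 1.
Proof.
move=> dg gt_unit.
have adjE : \forall h \near t, (\det (g h))^-1 *: \adj (g h) = invmx (g h).
  by apply: filterS (derivable1_near_unitmx dg gt_unit) => h gh_unit; rewrite /invmx gh_unit.
apply: near_eq_derivable adjE _; apply/derivable_mxP => i j.
under eq_fun do rewrite !mxE.
apply: derivableM; last exact: derivable_cofactor.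
by apply: derivableV; [rewrite -unitfE -unitmxE | exact: derivable_det].
Qed.

Lemma is_derive1_invmx n (g : R -> 'M[R]_n) (t : R) dg :
  is_derive t 1 g dg -> g t \in unitmx ->
  is_derive t 1 (fun h => invmx (g h)) (- (invmx (g t) *m dg *m invmx (g t))).
Proof.
move=> gdg gt_unit; have dgt : derivable g t 1 by case: gdg.
have ginv_der := derivableP (derivable1_invmx dgt gt_unit).
apply: (is_derive_eq ginv_der); set dI := 'D_1 _ t.
have : dg *m invmx (g t) + g t *m dI = 0.
  case: (is_derive_mulmx gdg ginv_der) => _ /= <-; rewrite -(derive_cst 1%:M t 1).
  apply: near_eq_derive; apply: filterS (derivable1_near_unitmx dgt gt_unit).
  by move=> h /mulmxV.
move=> /(congr1 (mulmx (invmx (g t)))); rewrite mulmxDr mulKmx // mulmx0.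
by move=> /eqP; rewrite addr_eq0 mulmxA => /eqP ->; rewrite opprK.
Qed.

End MatrixInverseDerivative.

(* Invertibility near x is only known along the line through x in direction v,
   hence the detour through a real variable. *)
Lemma is_derive_invmx {R : realFieldType} {V : normedModType R} n
    (F : V -> 'M[R]_n) x v dF :
  is_derive x v F dF -> F x \in unitmx ->
  is_derive x v (fun y => invmx (F y)) (- (invmx (F x) *m dF *m invmx (F x))).
Proof.
move=> /is_derive_alongP dF_ Fx_unit; apply/is_derive_alongP.
by have := is_derive1_invmx dF_; rewrite scale0r add0r; apply.
Qed.

Lemma derivable_invmx {R : realFieldType} {V : normedModType R} n
    (F : V -> 'M[R]_n) x v :
  derivable F x v -> F x \in unitmx -> derivable (fun y => invmx (F y)) x v.
Proof. by move=> /derivableP dF Fx_unit; case: (is_derive_invmx dF Fx_unit). Qed.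

Lemma mxtrace_mulT (F : comPzRingType) n (A B : 'M[F]_n) :
  \tr (A *m B) = \tr (A^T *m B^T).
Proof. by rewrite -mxtrace_tr trmx_mul mxtrace_mulC. Qed.

Lemma mxtrace_mul_trmx (F : pzRingType) m n (A B : 'M[F]_(m, n)) :
  \tr (A *m B^T) = \sum_i \sum_j A i j * B i j.
Proof. by apply: eq_bigr => i _; rewrite mxE; apply: eq_bigr => j _; rewrite mxE. Qed.

Lemma mulmx1_invmx (F : comUnitRingType) n (A X : 'M[F]_n) :
  A *m X = 1%:M -> invmx A = X.
Proof.
by move=> AX1; have [A_unit _] := mulmx1_unit AX1; rewrite -[X](mulKmx A_unit) AX1 mulmx1.
Qed.

Lemma mxtrace_conj (F : comUnitRingType) n (A X Y : 'M[F]_n) : A \in unitmx ->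
  \tr ((A *m X *m invmx A) *m (A *m Y *m invmx A)) = \tr (X *m Y).
Proof.
move=> A_unit; rewrite -!mulmxA (mulmxA (invmx A)) mulVmx // mul1mx.
by rewrite mxtrace_mulC -!mulmxA mulVmx // mulmx1.
Qed.

Section StrictlyLowerTriangular.
Variables (F : comPzRingType) (n : nat).
Implicit Types (A B : 'M[F]_n).

Definition strictly_lower A := forall i j : 'I_n, (i <= j)%N -> A i j = 0.

Lemma strictly_lower_trig A : strictly_lower A -> is_trig_mx A.
Proof. by move=> A_sl; apply/is_trig_mxP => i j /ltnW /A_sl. Qed.

Lemma mxtrace_strictly_lower A : strictly_lower A -> \tr A = 0.
Proof. by move=> A_sl; rewrite /mxtrace big1 // => i _; rewrite A_sl. Qed.

Lemma strictly_lowerN A : strictly_lower A -> strictly_lower (- A).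
Proof. by move=> A_sl i j le_ij; rewrite mxE A_sl ?oppr0. Qed.

Lemma strictly_lower_mull A B :
  is_trig_mx A -> strictly_lower B -> strictly_lower (A *m B).
Proof.
move=> /is_trig_mxP A_trig B_sl i j le_ij; rewrite mxE big1 // => k _.
have [lt_ik | le_ki] := ltnP i k; first by rewrite A_trig // mul0r.
by rewrite B_sl ?mulr0 // (leq_trans le_ki le_ij).
Qed.

Lemma strictly_lower_mulr A B :
  strictly_lower A -> is_trig_mx B -> strictly_lower (A *m B).
Proof.
move=> A_sl /is_trig_mxP B_trig i j le_ij; rewrite mxE big1 // => k _.
have [lt_ki | le_ik] := ltnP k i; first by rewrite B_trig ?mulr0 // (leq_trans lt_ki le_ij).
by rewrite A_sl ?mul0r.
Qed.

Lemma mxtrace_mul_trig_strictly_lower A B :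
  is_trig_mx A -> strictly_lower B -> \tr (A *m B) = 0.
Proof. by move=> A_trig B_sl; apply/mxtrace_strictly_lower/strictly_lower_mull. Qed.

Lemma mxtrace_mul_lower_diag_upper (L1 L2 U1 U2 : 'M[F]_n) (g1 g2 : 'rV[F]_n) :
  strictly_lower L1 -> strictly_lower L2 ->
  strictly_lower U1^T -> strictly_lower U2^T ->
  \tr ((L1 + diag_mx g1 + U1) *m (L2 + diag_mx g2 + U2)) =
  \tr (L1 *m U2) + \tr (U1 *m L2) + \tr (diag_mx g1 *m diag_mx g2).
Proof.
move=> L1_sl L2_sl U1T_sl U2T_sl; set G1 := diag_mx g1; set G2 := diag_mx g2.
have G1T : G1^T = G1 := tr_diag_mx g1; have G2T : G2^T = G2 := tr_diag_mx g2.
have G1_trig := diag_mx_is_trig g1; have G2_trig := diag_mx_is_trig g2.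
have trL1L2 : \tr (L1 *m L2) = 0.
  exact: mxtrace_mul_trig_strictly_lower (strictly_lower_trig L1_sl) L2_sl.
have trL1G2 : \tr (L1 *m G2) = 0.
  by rewrite mxtrace_mulC; apply: mxtrace_mul_trig_strictly_lower G2_trig L1_sl.
have trG1L2 : \tr (G1 *m L2) = 0.
  exact: mxtrace_mul_trig_strictly_lower G1_trig L2_sl.
have trG1U2 : \tr (G1 *m U2) = 0.
  by rewrite mxtrace_mulT G1T; apply: mxtrace_mul_trig_strictly_lower G1_trig U2T_sl.
have trU1G2 : \tr (U1 *m G2) = 0.
  rewrite mxtrace_mulT mxtrace_mulC G2T.
  exact: mxtrace_mul_trig_strictly_lower G2_trig U1T_sl.
have trU1U2 : \tr (U1 *m U2) = 0.
  rewrite mxtrace_mulT.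
  exact: mxtrace_mul_trig_strictly_lower (strictly_lower_trig U1T_sl) U2T_sl.
rewrite !mulmxDl !mulmxDr !mxtraceD trL1L2 trL1G2 trG1L2 trG1U2 trU1G2 trU1U2.
by rewrite !(addr0, add0r) addrAC.
Qed.

End StrictlyLowerTriangular.

Lemma is_trig_invmx (F : fieldType) n (A : 'M[F]_n) :
  is_trig_mx A -> is_trig_mx (invmx A).
Proof.
move=> A_trig; have [A_unit | /invmx_out -> //] := boolP (A \in unitmx).
have Aii_neq0 i : A i i != 0.
  by move: A_unit; rewrite unitmxE det_trig // unitfE => /prodf_neq0; apply.
move/is_trig_mxP: A_trig => A_trig; apply/is_trig_mxP.
suff Ai_trig k (i j : 'I_n) : i = k :> nat -> (i < j)%N -> invmx A i j = 0.
  by move=> i j; apply: Ai_trig.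
elim/ltn_ind: k i j => k IHk i j ik lt_ij.
have : (A *m invmx A) i j = 0 by rewrite mulmxV // mxE -val_eqE ltn_eqF.
rewrite mxE (bigD1 i) //= big1 ?addr0 => [/eqP | l ne_li].
  by rewrite mulf_eq0 (negPf (Aii_neq0 i)) => /eqP.
have [lt_li | lt_il | eq_li] := ltngtP l i.
- by rewrite (IHk l) ?mulr0 // -?ik // (ltn_trans lt_li lt_ij).
- by rewrite A_trig ?mul0r.
- by move: ne_li; rewrite -val_eqE /= eq_li eqxx.
Qed.

Lemma unitmx_diag (F : fieldType) n (d : 'rV[F]_n) :
  (forall i, d 0 i != 0) -> diag_mx d \in unitmx.
Proof. by move=> d_neq0; rewrite unitmxE det_diag unitfE; apply/prodf_neq0 => i _. Qed.

Lemma invmx_diag (F : fieldType) n (d : 'rV[F]_n) : (forall i, d 0 i != 0) ->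
  invmx (diag_mx d) = diag_mx (\row_i (d 0 i)^-1).
Proof.
move=> d_neq0; apply: mulmx1_invmx; rewrite mulmx_diag -diag_const_mx.
by congr diag_mx; apply/rowP => i; rewrite !mxE mulfV.
Qed.

(* The product-rule derivative of [invmx B *m diag_mx d *m (invmx B)^T] when B and d
   move with derivatives dB and dd; [dBi] is the derivative of [invmx B]. *)
Definition cov_deriv (F : fieldType) n (B dB : 'M[F]_n) (d dd : 'rV[F]_n) :=
  let dBi := - (invmx B *m dB *m invmx B) in
  (dBi *m diag_mx d + invmx B *m diag_mx dd) *m (invmx B)^T
  + invmx B *m diag_mx d *m dBi^T.

Section CovarianceFisher.
Variables (F : numFieldType) (n : nat) (B : 'M[F]_n) (d : 'rV[F]_n).
Hypotheses (B_unit : B \in unitmx) (B_trig : is_trig_mx B)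
  (d_neq0 : forall i, d 0 i != 0).

Local Notation Bi := (invmx B).
Local Notation D := (diag_mx d).
Local Notation Psi := (Bi *m D *m Bi^T).

Lemma invmx_cov : invmx Psi = B^T *m invmx D *m B.
Proof.
apply: mulmx1_invmx; rewrite -!mulmxA (mulmxA Bi^T) -trmx_mul mulmxV // trmx1 mul1mx.
by rewrite (mulmxA D) mulmxV ?unitmx_diag // mul1mx mulVmx.
Qed.

Lemma invmx_cov_mul_deriv dB dd :
  invmx Psi *m cov_deriv B dB d dd =
  B^T *m (- (invmx D *m (dB *m Bi) *m D) + invmx D *m diag_mx dd - (dB *m Bi)^T)
      *m Bi^T.
Proof.
rewrite invmx_cov /cov_deriv /= !linearN /= !trmx_mul.
do 3! rewrite ?mulmxDr ?mulmxDl ?mulmxN ?mulNmx ?mulmxA.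
by rewrite !(mulmxK B_unit) !(mulmxKV (unitmx_diag d_neq0)).
Qed.

Lemma fisher_cov_deriv dBk dBl ddk ddl :
  strictly_lower dBk -> strictly_lower dBl ->
  2^-1 * \tr (invmx Psi *m cov_deriv B dBk d ddk
               *m invmx Psi *m cov_deriv B dBl d ddl) =
  \sum_i \sum_j (invmx D *m dBk *m Bi) i j * (dBl *m Bi *m D) i j
  + 2^-1 * \sum_i d 0 i ^- 2 * ddk 0 i * ddl 0 i.
Proof.
move=> dBk_sl dBl_sl; have Bi_trig := is_trig_invmx B_trig.
rewrite -mulmxA !invmx_cov_mul_deriv trmx_inv mxtrace_conj ?unitmx_tr //.
rewrite -(mulmxA _ dBk) invmx_diag //.
set e := \row_i (d 0 i)^-1; set Pk := dBk *m Bi; set Pl := dBl *m Bi.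
have Pk_sl : strictly_lower Pk := strictly_lower_mulr dBk_sl Bi_trig.
have Pl_sl : strictly_lower Pl := strictly_lower_mulr dBl_sl Bi_trig.
have L_sl P : strictly_lower P -> strictly_lower (- (diag_mx e *m P *m D)).
  move=> P_sl; apply/strictly_lowerN/strictly_lower_mulr => //.
  exact: strictly_lower_mull.
have U_sl (P : 'M[F]_n) : strictly_lower P -> strictly_lower (- P^T)^T.
  by move=> P_sl; rewrite linearN /= trmxK; apply: strictly_lowerN.
rewrite !mulmx_diag (mxtrace_mul_lower_diag_upper _ _
  (L_sl _ Pk_sl) (L_sl _ Pl_sl) (U_sl _ Pk_sl) (U_sl _ Pl_sl)).
set S := \sum_i _.
have trLU : \tr (- (diag_mx e *m Pk *m D) *m - Pl^T) = S.
  rewrite mulNmx mulmxN opprK mxtrace_mul_trmx; apply: eq_bigr => i _.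
  by apply: eq_bigr => j _; rewrite !mul_mx_diag !mul_diag_mx !mxE; ring.
have trUL : \tr (- Pk^T *m - (diag_mx e *m Pl *m D)) = S.
  rewrite mulNmx mulmxN opprK mxtrace_mulC mxtrace_mul_trmx; apply: eq_bigr => i _.
  by apply: eq_bigr => j _; rewrite !mul_mx_diag !mul_diag_mx !mxE; ring.
have trGG : \tr (diag_mx (\row_j (e 0 j * ddk 0 j)) *m diag_mx (\row_j (e 0 j * ddl 0 j)))
    = \sum_i d 0 i ^- 2 * ddk 0 i * ddl 0 i.
  rewrite mulmx_diag mxtrace_diag; apply: eq_bigr => i _.
  by rewrite !mxE -exprVn; ring.
by rewrite trLU trUL trGG; field.
Qed.

End CovarianceFisher.

Section RowSelection.
Variables (R : realType) (n : nat) (A : {set 'I_n}).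

Lemma sel_mulmxE k (M : 'M[R]_(n, k)) a j : (sel R A *m M) a j = M (enum_val a) j.
Proof.
rewrite mxE (bigD1 (enum_val a)) //= big1 ?addr0; first by rewrite mxE eqxx mul1r.
by move=> l /negPf nl; rewrite mxE eq_sym nl mul0r.
Qed.

Lemma mulmx_trselE k (M : 'M[R]_(k, n)) i b : (M *m (sel R A)^T) i b = M i (enum_val b).
Proof.
rewrite mxE (bigD1 (enum_val b)) //= big1 ?addr0; first by rewrite !mxE eqxx mulr1.
by move=> l /negPf nl; rewrite !mxE eq_sym nl mulr0.
Qed.

Lemma sel_mulmx_tr : sel R A *m (sel R A)^T = 1%:M.
Proof.
apply/matrixP => a b; rewrite sel_mulmxE !mxE.
by rewrite (inj_eq enum_val_inj) eq_sym.
Qed.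

Lemma mulmx_sel_notin (w : 'rV[R]_#|A|) j : j \notin A -> (w *m sel R A) 0 j = 0.
Proof.
move=> jNA; rewrite mxE big1 // => b _; rewrite mxE.
have [Eb | _] := eqVneq (enum_val b) j; last by rewrite mulr0.
by move: (enum_valP b); rewrite Eb (negPf jNA).
Qed.

End RowSelection.

Definition coercive {R : realFieldType} {n} (s : R) (C : 'M[R]_n) :=
  forall u : 'rV[R]_n, s * (u *m u^T) 0 0 <= (u *m C *m u^T) 0 0.

Section Coercive.
Variables (R : realFieldType) (n : nat).

Lemma mulmx_tr_ge_sqr (u : 'rV[R]_n) i : u 0 i ^+ 2 <= (u *m u^T) 0 0.
Proof.
rewrite mxE (bigD1 i) //= mxE -expr2 lerDl; apply: sumr_ge0 => j _.
by rewrite mxE -expr2 sqr_ge0.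
Qed.

Lemma mulmx_tr_gt0 (u : 'rV[R]_n) : u != 0 -> 0 < (u *m u^T) 0 0.
Proof.
move=> u_neq0; have [i ui_neq0] : exists i, u 0 i != 0.
  apply/existsP; apply: contraR u_neq0 => /existsPn u0; apply/eqP/rowP => i.
  by rewrite mxE; apply/eqP; move: (u0 i); rewrite negbK.
apply: lt_le_trans (mulmx_tr_ge_sqr u i).
by rewrite lt_def sqr_ge0 andbT sqrf_eq0.
Qed.

Lemma coercive_unitmx s (C : 'M[R]_n) : 0 < s -> coercive s C -> C \in unitmx.
Proof.
move=> s_gt0 C_coer; rewrite unitmxE unitfE; apply/negP => /det0P[w w_neq0 wC0].
have := C_coer w; rewrite wC0 mul0mx [X in _ <= X]mxE.
by rewrite leNgt pmulr_rgt0 ?mulmx_tr_gt0.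
Qed.

Lemma coercive_conj k s (C : 'M[R]_n) (E : 'M[R]_(k, n)) :
  E *m E^T = 1%:M -> coercive s C -> coercive s (E *m C *m E^T).
Proof.
move=> EET1 C_coer u; have := C_coer (u *m E).
by rewrite trmx_mul !mulmxA -(mulmxA u E E^T) EET1 mulmx1.
Qed.

End Coercive.

Section VecchiaFactors.
Variables (R : realType) (n m : nat) (Z : 'M[R]_(n, m)) (N : 'I_n -> {set 'I_n}).
Hypothesis N_lt : forall i j, j \in N i -> (j < i)%N.

Lemma notin_neighbours i : i \notin N i.
Proof. by apply/negP => /N_lt; rewrite ltnn. Qed.

Lemma Bmat_upper S s2 (i j : 'I_n) : (i <= j)%N -> Bmat Z N S s2 i j = (i == j)%:R.
Proof.
move=> le_ij; rewrite [LHS]mxE [X in X + _]mxE [X in _ + X]mxE [X in - X]mxE.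
rewrite mulmx_sel_notin ?subr0 //.
by apply/negP => /N_lt; rewrite ltnNge le_ij.
Qed.

Lemma Bmat_trig S s2 : is_trig_mx (Bmat Z N S s2).
Proof.
apply/is_trig_mxP => i j lt_ij.
by rewrite Bmat_upper ?(ltnW lt_ij) // -val_eqE ltn_eqF.
Qed.

Lemma Bmat_unit S s2 : Bmat Z N S s2 \in unitmx.
Proof.
rewrite unitmxE det_trig ?Bmat_trig //.
by rewrite big1 ?unitr1 // => i _; rewrite Bmat_upper // eqxx.
Qed.

Lemma Csub_sel S s2 i :
  Csub Z N S s2 i = sel R (N i) *m Cmat Z S s2 *m (sel R (N i))^T.
Proof. by apply/matrixP => a b; rewrite mulmx_trselE sel_mulmxE !mxE. Qed.

Variables (S : 'M[R]_m) (s2 : R).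
Hypotheses (S_psd : forall v : 'cV[R]_m, 0 <= (v^T *m S *m v) 0 0) (s2_gt0 : 0 < s2).

Lemma Cmat_coercive : coercive s2 (Cmat Z S s2).
Proof.
move=> u; have entryE (X Y : 'M[R]_1) : (X + s2 *: Y) 0 0 = X 0 0 + s2 * Y 0 0.
  by rewrite !mxE.
rewrite /Cmat mulmxDr mulmxDl mul_mx_scalar -scalemxAl entryE lerDr.
have := S_psd (u *m Z)^T.
by rewrite trmxK !trmx_mul !mulmxA.
Qed.

Lemma Csub_unit i : Csub Z N S s2 i \in unitmx.
Proof.
rewrite Csub_sel; apply: coercive_unitmx s2_gt0 _.
exact/coercive_conj/Cmat_coercive/sel_mulmx_tr.
Qed.

(* [u] is the i-th row of B, and D_i is the Schur complement of C_{N(i)}. *)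
Lemma Dval_quadratic i (u := delta_mx 0 i - Arow Z N S s2 i *m sel R (N i)) :
  Dval Z N S s2 i = (u *m Cmat Z S s2 *m u^T) 0 0.
Proof.
set C := Cmat Z S s2; set E := sel R (N i); set e := delta_mx 0 i : 'rV[R]_n.
set w := Arow Z N S s2 i.
set rowK := \row_(b < #|N i|) Kmat Z S i (enum_val b).
set colK := \col_(a < #|N i|) Kmat Z S (enum_val a) i.
have i_notin (b : 'I_#|N i|) : (i == enum_val b) = false.
  by apply/negbTE/eqP => Eb; have := enum_valP b; rewrite -Eb => /N_lt; rewrite ltnn.
have eCET : e *m C *m E^T = rowK.
  by apply/rowP => b; rewrite mulmx_trselE -rowE !mxE i_notin mulr0n addr0.
have ECeT : E *m C *m e^T = colK.
  apply/colP => a; rewrite trmx_delta -colE [LHS]mxE sel_mulmxE !mxE eq_sym i_notin.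
  by rewrite mulr0n addr0.
have wCsub : w *m (E *m C *m E^T) = rowK by rewrite -Csub_sel mulmxKV ?Csub_unit.
have -> : u *m C *m u^T = e *m C *m e^T - w *m colK.
  rewrite /u linearB /= trmx_mul !mulmxBl !mulmxBr !mulmxA eCET.
  rewrite -(mulmxA w E C) -(mulmxA w (E *m C) e^T) ECeT.
  by rewrite -(mulmxA w (E *m C) E^T) wCsub opprB addrA subrK.
rewrite [RHS]mxE [X in _ + X]mxE -rowE trmx_delta -colE [X in X - _]mxE.
by rewrite [X in X - _]mxE.
Qed.

Lemma Dval_ge i : s2 <= Dval Z N S s2 i.
Proof.
rewrite Dval_quadratic; set u := _ - _.
have u_i : u 0 i = 1.
  rewrite [LHS]mxE [X in _ + X]mxE mulmx_sel_notin ?notin_neighbours //.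
  by rewrite subr0 mxE !eqxx.
apply: le_trans (Cmat_coercive u); rewrite -[leLHS]mulr1 ler_pM2l //.
by have := mulmx_tr_ge_sqr u i; rewrite u_i expr1n.
Qed.

End VecchiaFactors.

Section VecchiaDerivatives.
Variables (R : realType) (n m q : nat) (Z : 'M[R]_(n, m))
  (Sigma : 'rV[R]_q -> 'M[R]_m) (N : 'I_n -> {set 'I_n}) (th v : 'rV[R]_q.+1).
Hypotheses (Sigma_diff : forall x, differentiable Sigma x)
  (N_lt : forall i j, j \in N i -> (j < i)%N)
  (Csub_th_unit : forall i, Csub Z N (Sigma (rest th)) (sig2 th) i \in unitmx).

Lemma derivable_Sigma_rest : derivable (fun y => Sigma (rest y)) th v.
Proof.
have -> : (fun y => Sigma (rest y)) = Sigma \o (rsubmx : 'M[R]_(1, 1 + q) -> 'M[R]_(1, q)).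
  by apply/funext => y /=; apply/congr1/rowP => k; rewrite !mxE; congr (y 0 _); apply: val_inj.
apply/diff_derivable/differentiable_comp; last exact: Sigma_diff.
exact: (@differentiable_rsubmx R 1 1 q th).
Qed.

Lemma derivable_sig2 : derivable (@sig2 R q) th v.
Proof. exact/diff_derivable/differentiable_coord. Qed.

Lemma derivable_Kmat : derivable (fun y => Kmat Z (Sigma (rest y))) th v.
Proof.
apply: derivable_mulmx (derivable_cst _ _ _).
exact: derivable_mulmx (derivable_cst _ _ _) derivable_Sigma_rest.
Qed.

Lemma derivable_Cmat : derivable (fun y => Cmat Z (Sigma (rest y)) (sig2 y)) th v.
Proof.
by apply: derivableD; [exact: derivable_Kmat | exact/derivable_scalar_mx/derivable_sig2].
Qed.

Lemma derivable_Csub i : derivable (fun y => Csub Z N (Sigma (rest y)) (sig2 y) i) th v.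
Proof.
apply/derivable_mxP => a b; under eq_fun do rewrite mxE.
exact: (derivable_mxP _ _ _).1 derivable_Cmat _ _.
Qed.

Lemma derivable_Arow i : derivable (fun y => Arow Z N (Sigma (rest y)) (sig2 y) i) th v.
Proof.
apply: derivable_mulmx; last first.
  by apply: derivable_invmx; [exact: derivable_Csub | exact: Csub_th_unit].
apply/derivable_mxP => a b; under eq_fun do rewrite mxE.
exact: (derivable_mxP _ _ _).1 derivable_Kmat _ _.
Qed.

Lemma derivable_Di_th i : derivable (Di_th Z N Sigma i) th v.
Proof.
apply: derivableB; first exact: (derivable_mxP _ _ _).1 derivable_Cmat _ _.
apply: (derivable_mxP _ _ _).1; apply: derivable_mulmx; first exact: derivable_Arow.
apply/derivable_mxP => a b; under eq_fun do rewrite mxE.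
exact: (derivable_mxP _ _ _).1 derivable_Kmat _ _.
Qed.

Lemma derivable_B_th : derivable (B_th Z N Sigma) th v.
Proof.
apply: derivableB; first exact: derivable_cst.
apply/derivable_mxP => a b; under eq_fun do rewrite mxE.
apply: (derivable_mxP _ _ _).1.
by apply: derivable_mulmx; [exact: derivable_Arow | exact: derivable_cst].
Qed.

Lemma derive_B_th_strictly_lower : strictly_lower ('D_v (B_th Z N Sigma) th).
Proof.
move=> i j le_ij; rewrite derive_mx ?mxE; last exact: derivable_B_th.
have -> : (fun y => B_th Z N Sigma y i j) = cst (i == j)%:R.
  by apply/funext => y; rewrite /B_th Bmat_upper.
exact: derive_cst.
Qed.

Lemma derive_Psi_th : 'D_v (Psi_th Z N Sigma) th =
  cov_deriv (B_th Z N Sigma th) ('D_v (B_th Z N Sigma) th)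
            (\row_i Di_th Z N Sigma i th) (\row_i 'D_v (Di_th Z N Sigma i) th).
Proof.
have dB := derivableP derivable_B_th.
have dBi := is_derive_invmx dB (Bmat_unit Z N_lt _ _).
have dD : is_derive th v (D_th Z N Sigma) (diag_mx (\row_i 'D_v (Di_th Z N Sigma i) th)).
  apply: (is_derive_diag_mx (d := fun y => \row_i Di_th Z N Sigma i y)).
  apply/is_derive_mxP => i j; rewrite mxE; under eq_fun do rewrite mxE.
  exact/derivableP/derivable_Di_th.
by case: (is_derive_mulmx (is_derive_mulmx dBi dD) (is_derive_trmx dBi)).
Qed.

End VecchiaDerivatives.

Theorem proposition2 (R : realType) (n m q : nat) (Z : 'M[R]_(n, m))
  (Sigma : 'rV[R]_q -> 'M[R]_m) (N : 'I_n -> {set 'I_n})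
  (th : 'rV[R]_q.+1) :
  (forall x, differentiable Sigma x) ->
  (forall x, (Sigma x)^T = Sigma x) ->
  (forall x (v : 'cV[R]_m), 0 <= (v^T *m Sigma x *m v) 0 0) ->
  (forall i j, j \in N i -> (j < i)%N) ->
  0 < th 0 0 ->
  forall k l : 'I_q.+1,
    fisher Z N Sigma th k l =
      \sum_(i < n) \sum_(j < n)
         (invmx (D_th Z N Sigma th) *m 'D_(ek k) (B_th Z N Sigma) th
            *m invmx (B_th Z N Sigma th)) i j
       * ('D_(ek l) (B_th Z N Sigma) th *m invmx (B_th Z N Sigma th)
            *m D_th Z N Sigma th) i j
      + 2^-1 * \sum_(i < n)
          (Di_th Z N Sigma i th) ^- 2
          * 'D_(ek k) (Di_th Z N Sigma i) th
          * 'D_(ek l) (Di_th Z N Sigma i) th.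
Proof.
move=> Sigma_diff _ Sigma_psd N_lt s2_gt0 k l.
have Csub_th_unit := Csub_unit Z N (Sigma_psd (rest th)) s2_gt0.
rewrite /fisher !(derive_Psi_th _ Sigma_diff N_lt Csub_th_unit).
set B := B_th Z N Sigma th; set d := \row_i Di_th Z N Sigma i th.
have d_neq0 i : d 0 i != 0.
  by rewrite mxE gt_eqF // (lt_le_trans s2_gt0) // (Dval_ge Z N_lt (Sigma_psd (rest th))).
have -> : D_th Z N Sigma th = diag_mx d by [].
have -> : Psi_th Z N Sigma th = invmx B *m diag_mx d *m (invmx B)^T by [].
have B_unit : B \in unitmx := Bmat_unit Z N_lt _ _.
have B_trig : is_trig_mx B := Bmat_trig Z N_lt _ _.
rewrite (fisher_cov_deriv B_unit B_trig d_neq0 _ _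
  (derive_B_th_strictly_lower (ek k) Sigma_diff N_lt Csub_th_unit)
  (derive_B_th_strictly_lower (ek l) Sigma_diff N_lt Csub_th_unit)).
congr (_ + 2^-1 * _); apply: eq_bigr => i _.
by rewrite [d 0 i]mxE [X in _ * X]mxE [X in _ * X * _]mxE.
Qed.
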